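(* Let $\sigma$ be an automorphism of $D$, let $B$ be a subring of $D$ such that $D$ is a free right $B$-module of finite rank, and let $f\in D[t;\sigma,\delta]$ be monic of degree $m\ge2$ and $B$-weak semi-invariant. Then $S_f$ is a division algebra if and only if $f$ is irreducible. In particular, if $\sigma$ is an automorphism of $D$ and $f$ is right semi-invariant, then $S_f$ is a division algebra if and only if $f$ is irreducible.
   Context: $D$ is an associative division ring, $\sigma$ a ring endomorphism of $D$, $\delta$ a left $\sigma$-derivation. $D[t;\sigma,\delta]$ is the skew polynomial ring with $ta=\sigma(a)t+\delta(a)$. For monic $f$ of degree $m$, $S_f$ is the set of polynomials of degree $<m$ with multiplication $g\circ h=$ remainder of $gh$ upon right division by $f$. $f$ is $B$-weak semi-invariant if $fB\subseteq Df$, and right semi-invariant if $fD\subseteq Df$. $f$ is irreducible if it is not a unit and has no factorization $f=gh$ with $\deg g,\deg h<\deg f$. $S_f$ is a division algebra if left and right multiplication by every nonzero element are bijective. *)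

(* Skew polynomial ring D[t; sigma, delta] over an
   associative division ring D, represented by coefficient sequences
   ({poly D}: p = \sum_i p`_i t^i, coefficients on the LEFT of t^i),
   with a hand-defined skew multiplication obeying t a = sigma(a) t + delta(a). *)
From HB Require Import structures.
From mathcomp Require Import all_boot all_order all_algebra.
Set Implicit Arguments. Unset Strict Implicit. Unset Printing Implicit Defensive.
Import Order.TTheory GRing.Theory.
Local Open Scope ring_scope.

Section Skew.
Variable D : unitRingType.
Variables (sigma delta : D -> D).

Definition division_ring := forall x : D, x != 0 -> x \is a GRing.unit.

Definition left_sigma_derivation :=
  (forall a b : D, delta (a + b) = delta a + delta b) /\
  (forall a b : D, delta (a * b) = sigma a * delta b + delta a * b).

(* left multiplication by t:  t * (\sum a_i t^i) = \sum (sigma(a_i) t^(i+1) + delta(a_i) t^i) *)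
Definition tmul (p : {poly D}) : {poly D} :=
  'X * map_poly sigma p + map_poly delta p.

Definition skew_mul (p q : {poly D}) : {poly D} :=
  \sum_(i < size p) (p`_i)%:P * iter (nat_of_ord i) tmul q.

(* degree, with deg 0 = 0 (irrelevant for the statement since f is monic) *)
Definition sdeg (p : {poly D}) : nat := (size p).-1.

Definition skew_unit (p : {poly D}) :=
  exists u, skew_mul p u = 1 /\ skew_mul u p = 1.

Definition skew_irreducible (f : {poly D}) :=
  ~ skew_unit f /\
  ~ (exists g h, f = skew_mul g h /\ sdeg g < sdeg f /\ sdeg h < sdeg f)%N.

Fixpoint srem_rec (f : {poly D}) (n : nat) (p : {poly D}) : {poly D} :=
  match n with
  | 0 => p
  | n'.+1 =>
      if (size p < size f)%N then p
      else srem_rec f n'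
             (p - skew_mul ((lead_coef p)%:P * 'X^(size p - size f)) f)
  end.

Definition srem (f p : {poly D}) : {poly D} := srem_rec f (size p) p.

Definition sf_mul (f g h : {poly D}) : {poly D} := srem f (skew_mul g h).

Definition in_Sf (f p : {poly D}) : bool := (size p < size f)%N.

Definition Sf_division (f : {poly D}) :=
  forall g, in_Sf f g -> g != 0 ->
    (forall r, in_Sf f r -> exists! h, in_Sf f h /\ sf_mul f g h = r) /\
    (forall r, in_Sf f r -> exists! h, in_Sf f h /\ sf_mul f h g = r).

Definition weak_semi_invariant (B : {pred D}) (f : {poly D}) :=
  forall b, b \in B -> exists d : D, skew_mul f b%:P = skew_mul d%:P f.

Definition right_semi_invariant (f : {poly D}) :=
  forall b : D, exists d : D, skew_mul f b%:P = skew_mul d%:P f.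

Definition free_right_module_finite_rank (B : {pred D}) :=
  exists (n : nat) (e : 'I_n -> D),
    (forall x : D, exists b : 'I_n -> D,
        (forall i, b i \in B) /\ x = \sum_(i < n) e i * b i) /\
    (forall b : 'I_n -> D, (forall i, b i \in B) ->
        \sum_(i < n) e i * b i = 0 -> forall i, b i = 0).

End Skew.

From HB Require Import structures.
From mathcomp Require Import all_boot all_order all_algebra.
From mathcomp Require Import zify.
Set Implicit Arguments. Unset Strict Implicit. Unset Printing Implicit Defensive.
Import Order.TTheory GRing.Theory.
Local Open Scope ring_scope.

(* If [f = g h] with [deg g, deg h < deg f], then [g] is a zero divisor of [S_f], and [f] is
   not a unit for degree reasons.  Conversely, let [f] be irreducible.  Euclid's algorithm for
   right division shows that every nonzero [h] of degree [< deg f] satisfies a Bezout identity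
   [1 = p h + q f]; so if [g h] lay in [D[t] f] for nonzero [g] of degree [< deg f], every
   element of [S_f] would be the remainder of some [s h] with [deg s < deg g], too few for the
   [m]-dimensional left [D]-space [S_f].  Hence left and right multiplication by a nonzero
   element of [S_f] are injective.  Right multiplication is left [D]-linear and, as [f B] lies
   in [D f], left multiplication is right [B]-linear.  When [sigma] is bijective, the
   [t^i e_j] form a basis of [S_f] over [B] (which is then a division ring), so both maps
   are injective endomorphisms of free modules of finite rank over a division ring, hence
   bijective.  The second statement is the case [B = D]. *)

(** * Linear algebra over a division subring *)

Lemma predT_divring_closed (R : unitRingType) : divring_closed (predT : {pred R}).
Proof. by []. Qed.

Section DivisionSubring.

Variables (R : unitRingType) (K : {pred R}).
Hypothesis K_divring : divring_closed K.
HB.instance Definition _ := GRing.isDivringClosed.Build R K K_divring.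
Hypothesis K_unit : {in K, forall a, a != 0 -> a \is a GRing.unit}.

(* Eliminate the last equation with a pivot [a k ord_max != 0], if there is one. *)
Lemma exists_nontrivial_solution n (a : 'I_n.+1 -> 'I_n -> R) :
  (forall j i, a j i \in K) ->
  exists c : 'I_n.+1 -> R,
    [/\ forall j, c j \in K, exists j, c j != 0 & forall i, \sum_j a j i * c j = 0].
Proof.
elim: n a => [|n IH] a Ka.
  exists (fun _ => 1); split=> [j||[]//]; first exact: rpred1.
  by exists ord0; rewrite oner_neq0.
have [k akn0|a_last0] := pickP (fun j : 'I_n.+2 => a j ord_max != 0); last first.
  have [c' [Kc' [j0 cj0] hc']] :=
    IH (fun j i => a (lift ord_max j) (lift ord_max i)) (fun j i => Ka _ _).
  pose c j := if unlift ord_max j is Some j' then c' j' else 0.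
  exists c; split.
  - by move=> j; rewrite /c; case: (unlift ord_max j) => [j'|]; rewrite ?rpred0.
  - by exists (lift ord_max j0); rewrite /c liftK.
  move=> i; rewrite (bigD1_ord ord_max) //= /c unlift_none mulr0 add0r.
  under eq_bigr do rewrite liftK.
  case: (unliftP ord_max i) => [i' ->|->]; first exact: hc'.
  by rewrite big1 // => j _; move/negbFE/eqP: (a_last0 (lift ord_max j)) => ->; rewrite mul0r.
set p := a k ord_max in akn0.
have p_unit : p \is a GRing.unit := K_unit (Ka _ _) akn0.
pose a' j i := a (lift k j) (lift ord_max i) - a k (lift ord_max i) * p^-1 * a (lift k j) ord_max.
have Ka' j i : a' j i \in K by rewrite rpredB ?rpredM ?rpredV ?Ka.
have [c' [Kc' [j0 cj0] hc']] := IH a' Ka'.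
pose c j := if unlift k j is Some j' then c' j'
            else - \sum_(j' < n.+1) p^-1 * a (lift k j') ord_max * c' j'.
exists c; split.
- move=> j; rewrite /c; case: (unlift k j) => [j'|] //.
  by rewrite rpredN rpred_sum // => j' _; rewrite !rpredM ?rpredV ?Ka ?Kc'.
- by exists (lift k j0); rewrite /c liftK.
move=> i; rewrite (bigD1_ord k) //= /c unlift_none.
under eq_bigr do rewrite liftK.
rewrite mulrN mulr_sumr -sumrN -big_split /=.
under eq_bigr do rewrite !mulrA addrC -mulrBl.
case: (unliftP ord_max i) => [i' ->|->]; first exact: hc'.
by rewrite big1 // => j _; rewrite /a' -/p mulrV // mul1r subrr mul0r.
Qed.

Variables (M : zmodType) (act : M -> R -> M).
Hypothesis actDl : forall x y b, act (x + y) b = act x b + act y b.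
Hypothesis actDr : forall x b c, act x (b + c) = act x b + act x c.
Hypothesis actA : forall x b c, act x (b * c) = act (act x b) c.
Hypothesis act1 : forall x, act x 1 = x.

Lemma act0l b : act 0 b = 0.
Proof. by apply: (addrI (act 0 b)); rewrite -actDl !addr0. Qed.

Lemma act0r x : act x 0 = 0.
Proof. by apply: (addrI (act x 0)); rewrite -actDr !addr0. Qed.

Lemma actNl x b : act (- x) b = - act x b.
Proof. by apply/eqP; rewrite -addr_eq0 -actDl addNr act0l. Qed.

Lemma actNr x b : act x (- b) = - act x b.
Proof. by apply/eqP; rewrite -addr_eq0 -actDr addNr act0r. Qed.

Lemma act_suml I (r : seq I) (P : pred I) (F : I -> M) b :
  act (\sum_(i <- r | P i) F i) b = \sum_(i <- r | P i) act (F i) b.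
Proof. by apply: (big_morph (act^~ b)) => [x y|]; rewrite ?actDl ?act0l. Qed.

Lemma act_sumr I (r : seq I) (P : pred I) (F : I -> R) x :
  act x (\sum_(i <- r | P i) F i) = \sum_(i <- r | P i) act x (F i).
Proof. by apply: (big_morph (act x)) => [b c|]; rewrite ?actDr ?act0r. Qed.

Definition Kcoords (I : finType) (b : I -> R) := forall i, b i \in K.

Definition free_basis (P : M -> Prop) (I : finType) (u : I -> M) :=
  [/\ forall x, P x -> exists2 b, Kcoords b & x = \sum_i act (u i) (b i),
      forall b, Kcoords b -> \sum_i act (u i) (b i) = 0 -> forall i, b i = 0
    & forall b, Kcoords b -> P (\sum_i act (u i) (b i))].

Lemma span_dependent (P : M -> Prop) n (u : 'I_n -> M) (v : 'I_n.+1 -> M) :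
  (forall x, P x -> exists2 b, Kcoords b & x = \sum_i act (u i) (b i)) ->
  (forall j, P (v j)) ->
  exists c, [/\ Kcoords c, exists j, c j != 0 & \sum_j act (v j) (c j) = 0].
Proof.
move=> span Pv.
have [B HB] : exists B : 'I_n.+1 -> 'I_n -> R,
    forall j, Kcoords (B j) /\ v j = \sum_i act (u i) (B j i).
  apply: (@fin_all_exists _ (fun _ => 'I_n -> R)
    (fun j b => Kcoords b /\ v j = \sum_i act (u i) (b i))) => j.
  by have [b Kb ->] := span _ (Pv j); exists b.
have [c [Kc c_neq0 hc]] := exists_nontrivial_solution (fun j i => (HB j).1 i).
exists c; split=> //.
transitivity (\sum_j \sum_i act (u i) (B j i * c j)).
  by apply: eq_bigr => j _; rewrite (HB j).2 act_suml; under eq_bigr do rewrite -actA.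
by rewrite exchange_big big1 //= => i _; rewrite -act_sumr hc act0r.
Qed.

Lemma span_enum_val (P : M -> Prop) (I : finType) (u : I -> M) :
  (forall x, P x -> exists2 b, Kcoords b & x = \sum_i act (u i) (b i)) ->
  forall x, P x -> exists2 b, Kcoords b & x = \sum_(k < #|I|) act (u (enum_val k)) (b k).
Proof.
move=> span x /span[b Kb ->]; exists (b \o enum_val) => [k|]; first exact: Kb.
exact: (big_enum_val (fun i => act (u i) (b i))).
Qed.

Lemma free_basis_mem P (I : finType) (u : I -> M) i : free_basis P u -> P (u i).
Proof.
case=> _ _ comb.
have -> : u i = \sum_j act (u j) (i == j)%:R.
  rewrite (bigD1 i) //= eqxx act1 big1 ?addr0 // => j ji.
  by rewrite eq_sym (negPf ji) act0r.
by apply: comb => j; apply: rpred_nat.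
Qed.

Lemma injective_endo_surjective P (I : finType) (u : I -> M) (phi : M -> M) :
  free_basis P u ->
  {morph phi : x y / x + y} ->
  (forall x b, b \in K -> phi (act x b) = act (phi x) b) ->
  (forall x, P x -> P (phi x)) ->
  (forall x, P x -> phi x = 0 -> x = 0) ->
  forall y, P y -> exists2 x, P x & phi x = y.
Proof.
move=> basis phiD phiZ phiP phi_inj y Py; have [span free comb] := basis.
have phi_sum J (r : seq J) (F : J -> M) : phi (\sum_(j <- r) F j) = \sum_(j <- r) phi (F j).
  by apply: big_morph => //; apply: (addrI (phi 0)); rewrite -phiD !addr0.
pose v (j : 'I_#|I|.+1) := if unlift ord_max j is Some k then phi (u (enum_val k)) else y.
have Pv j : P (v j).
  by rewrite /v; case: (unlift ord_max j) => [k|//]; apply/phiP/(free_basis_mem _ basis).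
have [c [Kc [j0 cj0] hc]] := span_dependent (span_enum_val span) Pv.
pose c' i := c (lift ord_max (enum_rank i)).
have Kc' : Kcoords c' by move=> i; apply: Kc.
pose x := \sum_i act (u i) (c' i).
have yx : act y (c ord_max) + phi x = 0.
  rewrite -hc (bigD1_ord ord_max) //= {1}/v unlift_none /x phi_sum.
  rewrite (big_enum_val (fun i => phi (act (u i) (c' i)))); congr (_ + _).
  by apply: eq_bigr => k _; rewrite /v liftK phiZ // /c' enum_valK.
have [cm0|cmn0] := eqVneq (c ord_max) 0.
  exfalso; move: yx; rewrite cm0 act0r add0r => /(phi_inj _ (comb _ Kc')) /(free _ Kc') x0.
  move: cj0; case: (unliftP ord_max j0) => [k ->|->]; last by rewrite cm0 eqxx.
  by have := x0 (enum_val k); rewrite /c' enum_valK => ->; rewrite eqxx.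
have cm_unit : c ord_max \is a GRing.unit := K_unit (Kc _) cmn0.
exists (\sum_i act (u i) (c' i * - (c ord_max)^-1)).
  by apply: comb => i; rewrite rpredM ?rpredN ?rpredV.
transitivity (act (phi x) (- (c ord_max)^-1)).
  rewrite /x !phi_sum act_suml; apply: eq_bigr => i _.
  by rewrite !phiZ ?actA // rpredM ?rpredN ?rpredV.
have -> : phi x = - act y (c ord_max) by apply/eqP; rewrite -addr_eq0 addrC yx.
by rewrite actNl actNr opprK -actA mulrV ?act1.
Qed.

End DivisionSubring.

(* The coordinates of [e_0 b^-1] in a [B]-basis [e] of [D] show that [b^-1] lies in [B]. *)
Lemma free_rank_divring_closed (D : unitRingType) (B : {pred D}) :
  division_ring D -> subring_closed B -> free_right_module_finite_rank B ->
  divring_closed B.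
Proof.
move=> D_division [B1 BB BM] [[|n] [e [span free]]].
  by have [c [_]] := span 1; rewrite big_ord0 => /eqP; rewrite oner_eq0.
have B0 : 0 \in B by rewrite -(subrr 1) BB.
split=> // a b Ba Bb; rewrite BM //.
have [->|b0] := eqVneq b 0; first by rewrite invr0.
have b_unit := D_division _ b0.
have [c [Bc c_eq]] := span (e ord0 * b^-1).
pose c' i := c i * b - (i == ord0)%:R.
have Bc' i : c' i \in B by rewrite BB ?BM //; case: (i == ord0).
have c'_rel : \sum_i e i * c' i = 0.
  rewrite /c'; under eq_bigr do rewrite mulrBr mulrA.
  rewrite sumrB -mulr_suml -c_eq mulrVK // big_ord_recl eqxx mulr1 big1 ?addr0 ?subrr //.
  by move=> i _; rewrite mulr0.
have := free _ Bc' c'_rel ord0; rewrite /c' eqxx => /eqP; rewrite subr_eq0 => /eqP cb.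
by rewrite (_ : b^-1 = c ord0) // -[c ord0](mulrK b_unit) cb mul1r.
Qed.

(** * Skew polynomials *)

Lemma size_sum_le (R : nzSemiRingType) I (r : seq I) (P : pred I) (F : I -> {poly R}) n :
  (forall i, P i -> (size (F i) <= n)%N) -> (size (\sum_(i <- r | P i) F i)%R <= n)%N.
Proof.
move=> le_n; apply: (big_ind (fun x : {poly R} => size x <= n)%N) => //.
  by rewrite size_poly0.
by move=> x y le_x le_y; apply: leq_trans (size_polyD _ _) _; rewrite geq_max le_x.
Qed.

Lemma coef_sum_polyCXn (R : nzSemiRingType) n (b : 'I_n -> R) (j : 'I_n) :
  (\sum_(i < n) (b i)%:P * 'X^i)`_j = b j.
Proof.
rewrite coef_sum (bigD1 j) //= coefCM coefXn eqxx mulr1 big1 ?addr0 // => i i_neq.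
by rewrite coefCM coefXn (_ : (nat_of_ord j == i) = false) ?mulr0 //; apply/negbTE; rewrite eq_sym.
Qed.

Section SkewPolynomials.

Variables (D : unitRingType) (sigma : {rmorphism D -> D}) (delta : D -> D).
Hypothesis delta_derivation : left_sigma_derivation sigma delta.

Local Notation T := (tmul sigma delta).
Local Infix "**" := (skew_mul sigma delta) (at level 40, left associativity).
Implicit Types (p q r d f g h x y : {poly D}) (c : D).

Lemma delta_nmod_morphism : nmod_morphism delta.
Proof.
have deltaD := delta_derivation.1; split=> //.
by apply: (addrI (delta 0)); rewrite -deltaD !addr0.
Qed.
HB.instance Definition _ := GRing.isNmodMorphism.Build D D delta delta_nmod_morphism.

Lemma deltaM a b : delta (a * b) = sigma a * delta b + delta a * b.
Proof. exact: delta_derivation.2. Qed.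

Lemma delta1 : delta 1 = 0.
Proof.
have := deltaM 1 1; rewrite mul1r rmorph1 mul1r mulr1 => dup.
by apply: (addrI (delta 1)); rewrite addr0 -dup.
Qed.

Lemma tmul_zmod_morphism : zmod_morphism T.
Proof. by move=> p q; rewrite /tmul !raddfB mulrBr addrACA opprD. Qed.
HB.instance Definition _ := GRing.isZmodMorphism.Build _ _ T tmul_zmod_morphism.

Lemma coef_tmul p i : (T p)`_i = (if i == 0%N then 0 else sigma p`_i.-1) + delta p`_i.
Proof. by rewrite coefD coefXM !coef_map_id0 ?raddf0. Qed.

Lemma tmul_polyCM c p : T (c%:P * p) = (sigma c)%:P * T p + (delta c)%:P * p.
Proof.
apply/polyP => i; rewrite coef_tmul coefD !coefCM coef_tmul deltaM rmorphM.
by case: (i == 0%N); rewrite ?add0r // mulrDr addrA.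
Qed.

Lemma tmul_Xn i : T 'X^i = 'X^(i.+1).
Proof.
rewrite /tmul map_polyXn -exprS -[RHS]addr0; congr (_ + _); apply/polyP => j.
by rewrite coef_map_id0 ?raddf0 // coefXn coef0; case: (j == i); rewrite ?delta1 ?raddf0.
Qed.

Lemma iter_tmul_zmod_morphism n : zmod_morphism (iter n T).
Proof. by elim: n => [//|n IH] p q /=; rewrite IH raddfB. Qed.

Lemma skew_mulE n p q : (size p <= n)%N ->
  p ** q = \sum_(i < n) (p`_i)%:P * iter i T q.
Proof.
elim: n => [|n IH] le_p_n.
  by move: le_p_n; rewrite leqn0 /skew_mul => /eqP ->; rewrite !big_ord0.
move: le_p_n; rewrite leq_eqVlt => /orP [/eqP <- //|lt_p_n].
by rewrite big_ord_recr /= -IH // nth_default // mul0r addr0.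
Qed.

Lemma skew_mulr_zmod_morphism p : zmod_morphism (skew_mul sigma delta p).
Proof.
move=> q r; rewrite /skew_mul -sumrB; apply: eq_bigr => i _.
by rewrite iter_tmul_zmod_morphism mulrBr.
Qed.
HB.instance Definition _ p :=
  GRing.isZmodMorphism.Build _ _ (skew_mul sigma delta p) (skew_mulr_zmod_morphism p).

Lemma skew_mul0r p : p ** 0 = 0.
Proof. exact: raddf0. Qed.

Lemma skew_mulDr p q1 q2 : p ** (q1 + q2) = p ** q1 + p ** q2.
Proof. exact: raddfD. Qed.

Lemma skew_mulBr p q1 q2 : p ** (q1 - q2) = p ** q1 - p ** q2.
Proof. exact: raddfB. Qed.

Lemma skew_mul_sumr p I (s : seq I) (P : pred I) (F : I -> {poly D}) :
  p ** (\sum_(i <- s | P i) F i) = \sum_(i <- s | P i) p ** F i.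
Proof. exact: raddf_sum. Qed.

Lemma skew_mul0l q : 0 ** q = 0.
Proof. by rewrite /skew_mul size_poly0 big_ord0. Qed.

Lemma skew_mulDl p1 p2 q : (p1 + p2) ** q = p1 ** q + p2 ** q.
Proof.
rewrite !(skew_mulE (n := maxn (size p1) (size p2))) ?leq_maxl ?leq_maxr ?size_polyD //.
by rewrite -big_split; apply: eq_bigr => i _; rewrite coefD polyCD mulrDl.
Qed.

Lemma skew_mulNl p q : (- p) ** q = - (p ** q).
Proof. by apply/eqP; rewrite -addr_eq0 -skew_mulDl addNr skew_mul0l. Qed.

Lemma skew_mulBl p1 p2 q : (p1 - p2) ** q = p1 ** q - p2 ** q.
Proof. by rewrite skew_mulDl skew_mulNl. Qed.

Lemma skew_mul_suml I (s : seq I) (P : pred I) (F : I -> {poly D}) q :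
  (\sum_(i <- s | P i) F i) ** q = \sum_(i <- s | P i) F i ** q.
Proof.
by apply: (big_morph (skew_mul sigma delta ^~ q)) => [p1 p2|]; rewrite ?skew_mulDl ?skew_mul0l.
Qed.

Lemma size_polyCM_le c p : (size (c%:P * p)%R <= size p)%N.
Proof. by rewrite mul_polyC; apply/leq_sizeP => j le_pj; rewrite coefZ nth_default ?mulr0. Qed.

Lemma skew_mulCMl c p q : (c%:P * p) ** q = c%:P * (p ** q).
Proof.
rewrite !(skew_mulE (n := size p)) ?size_polyCM_le // mulr_sumr.
by apply: eq_bigr => i _; rewrite coefCM polyCM mulrA.
Qed.

Lemma skew_mulCl c q : c%:P ** q = c%:P * q.
Proof. by rewrite (skew_mulE (n := 1)) ?size_polyC_leq1 // big_ord1 coefC. Qed.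

Lemma skew_mul1l q : 1 ** q = q.
Proof. by rewrite -polyC1 skew_mulCl mul1r. Qed.

Lemma skew_mulXl p q : ('X * p) ** q = p ** T q.
Proof.
rewrite (skew_mulE (n := (size p).+1)); last first.
  by apply: leq_trans (size_polyMleq _ _) _; rewrite size_polyX.
rewrite big_ord_recl coefXM eqxx mul0r add0r (skew_mulE (n := size p)) //.
by apply: eq_bigr => i _; rewrite coefXM /= -iterSr.
Qed.

Lemma skew_mul_map (F : D -> D) p q : F 0 = 0 ->
  map_poly F p ** q = \sum_(i < size p) (F p`_i)%:P * iter i T q.
Proof.
move=> F0; rewrite (skew_mulE (n := size p)); last first.
  by apply/leq_sizeP => j le_pj; rewrite coef_map_id0 // nth_default.
by apply: eq_bigr => i _; rewrite coef_map_id0.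
Qed.

Lemma skew_mul_tmull q r : T q ** r = T (q ** r).
Proof.
rewrite {1}/tmul skew_mulDl skew_mulXl !skew_mul_map ?raddf0 //.
rewrite [q ** r]/skew_mul raddf_sum -big_split; apply: eq_bigr => i _.
by rewrite /= tmul_polyCM -iterSr.
Qed.

Lemma skew_mulA p q r : (p ** q) ** r = p ** (q ** r).
Proof.
have iter_tmull n q' : iter n T q' ** r = iter n T (q' ** r).
  by elim: n => //= n IH; rewrite skew_mul_tmull IH.
rewrite [p ** q]/skew_mul skew_mul_suml [p ** (q ** r)]/skew_mul.
by apply: eq_bigr => i _; rewrite skew_mulCMl iter_tmull.
Qed.

Lemma skew_mulXnl k q : 'X^k ** q = iter k T q.
Proof.
elim: k q => [|k IH] q; first by rewrite expr0 skew_mul1l.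
by rewrite exprS skew_mulXl IH iterSr.
Qed.

Lemma skew_mul1r p : p ** 1 = p.
Proof.
have iter_tmul1 i : iter i T 1 = 'X^i.
  by elim: i => [|i IH] /=; rewrite ?expr0 // IH tmul_Xn.
rewrite /skew_mul; under eq_bigr do rewrite iter_tmul1 mul_polyC.
by rewrite -poly_def coefK.
Qed.

Hypothesis D_division : division_ring D.

Lemma unitDE c : (c \is a GRing.unit) = (c != 0).
Proof. by apply/idP/idP=> [|/D_division //]; apply: contraTneq => ->; rewrite unitr0. Qed.

Lemma lreg_neq0 c : c != 0 -> GRing.lreg c.
Proof. by rewrite -unitDE => /mulrI. Qed.

Lemma sigma_neq0 c : c != 0 -> sigma c != 0.
Proof. by rewrite -!unitDE => /(rmorph_unit sigma). Qed.

Lemma size_polyCM c p : c != 0 ->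
  size (c%:P * p) = size p /\ lead_coef (c%:P * p) = c * lead_coef p.
Proof. by move/lreg_neq0=> c_reg; rewrite mul_polyC lreg_size ?lead_coef_lreg. Qed.

Lemma size_tmul q : q != 0 ->
  size (T q) = (size q).+1 /\ lead_coef (T q) = sigma (lead_coef q).
Proof.
move=> q0; have sl0 : sigma (lead_coef q) != 0 by rewrite sigma_neq0 ?lead_coef_eq0.
have sq0 : map_poly sigma q != 0 by rewrite map_poly_eq0_id0.
have sizeX : size ('X * map_poly sigma q) = (size q).+1.
  by rewrite -commr_polyX size_mulX // size_map_poly_id0.
have lt_delta : (size (map_poly delta q) < size ('X * map_poly sigma q)%R)%N.
  rewrite sizeX ltnS; apply/leq_sizeP => j le_qj.
  by rewrite coef_map_id0 ?raddf0 // nth_default ?raddf0.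
rewrite /tmul size_polyDl // lead_coefDl // sizeX -commr_polyX lead_coefMX.
by rewrite lead_coef_map_id0 ?rmorph0.
Qed.

Lemma size_iter_tmul k q : q != 0 ->
  size (iter k T q) = (size q + k)%N /\ lead_coef (iter k T q) = iter k sigma (lead_coef q).
Proof.
move=> q0; elim: k => [|k [IH1 IH2]] /=; first by rewrite addn0.
have iter_q0 : iter k T q != 0 by rewrite -size_poly_gt0 IH1 addn_gt0 size_poly_gt0 q0.
by have [-> ->] := size_tmul iter_q0; rewrite IH1 IH2 addnS.
Qed.

Lemma size_iter_tmul_le k q : (size (iter k T q) <= size q + k)%N.
Proof.
have [->|q0] := eqVneq q 0; last by rewrite (size_iter_tmul k q0).1.
by rewrite (_ : iter k T 0 = 0) ?size_poly0 //; elim: k => //= k ->; rewrite raddf0.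
Qed.

Lemma size_skew_mul p q : p != 0 -> q != 0 ->
  size (p ** q) = (size p + size q).-1 /\
  lead_coef (p ** q) = lead_coef p * iter (size p).-1 sigma (lead_coef q).
Proof.
move=> p0 q0; set d := (size p).-1.
have size_p : size p = d.+1 by rewrite prednK // size_poly_gt0.
have lp0 : lead_coef p != 0 by rewrite lead_coef_eq0.
have [size_top lead_top] := size_polyCM (iter d T q) lp0.
have [size_iter lead_iter] := size_iter_tmul d q0.
have -> : p ** q = \sum_(i < d) (p`_i)%:P * iter i T q + (lead_coef p)%:P * iter d T q.
  by rewrite (skew_mulE (n := d.+1)) ?size_p // big_ord_recr /= lead_coefE.
have q_gt0 : (0 < size q)%N by rewrite size_poly_gt0.
have size_low : (size (\sum_(i < d) (p`_i)%:P * iter i T q)%R < size (iter d T q))%N.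
  rewrite size_iter; apply: (@leq_ltn_trans (size q + d).-1); last by lia.
  apply: size_sum_le => i _; apply: leq_trans (size_polyCM_le _ _) _.
  by apply: leq_trans (size_iter_tmul_le i q) _; have := ltn_ord i; lia.
rewrite addrC size_polyDl ?size_top // lead_coefDl ?size_top //.
by rewrite size_iter lead_top lead_iter size_p addSn addnC.
Qed.

Lemma size_skew_mul_le p q : (size (p ** q) <= (size p + size q).-1)%N.
Proof.
have [->|p0] := eqVneq p 0; first by rewrite skew_mul0l size_poly0.
have [->|q0] := eqVneq q 0; first by rewrite skew_mul0r size_poly0.
by rewrite (size_skew_mul p0 q0).1.
Qed.

Lemma size_skew_mulC_le p c : (size (p ** c%:P) <= size p)%N.
Proof. by apply: leq_trans (size_skew_mul_le _ _) _; have := size_polyC_leq1 c; lia. Qed.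

Lemma size_XnC i c : c != 0 -> size ('X^i ** c%:P) = i.+1.
Proof.
move=> c0; have cP0 : c%:P != 0 by rewrite polyC_eq0.
by rewrite skew_mulXnl (size_iter_tmul _ cP0).1 size_polyC c0.
Qed.

Lemma size_XnC_le i c : (size ('X^i ** c%:P) <= i.+1)%N.
Proof. by have [->|/size_XnC ->] := eqVneq c 0; rewrite ?skew_mul0r ?size_poly0. Qed.

Lemma size_sub_lead_lt p q : p != 0 -> size q = size p -> lead_coef q = lead_coef p ->
  (size (p - q)%R < size p)%N.
Proof.
move=> p0 size_q lead_q; have p_gt0 : (0 < size p)%N by rewrite size_poly_gt0.
rewrite -[size p]prednK //; apply/leq_sizeP => j le_j; rewrite coefB.
have [->|j_neq] := eqVneq j (size p).-1.
  by rewrite -lead_coefE -size_q -lead_coefE lead_q subrr.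
have lt_j : ((size p).-1 < j)%N by rewrite ltn_neqAle eq_sym j_neq.
have le_pj : (size p <= j)%N by lia.
by rewrite !nth_default ?subrr ?size_q.
Qed.

(** * Right division by a monic polynomial *)

Section RightDivision.

Variable f : {poly D}.
Hypothesis f_monic : f \is monic.

Local Notation rem := (srem sigma delta f).

Lemma srem_rec_spec n p : (size p <= n)%N ->
  exists q, srem_rec sigma delta f n p = p - q ** f /\
            (size (srem_rec sigma delta f n p) < size f)%N.
Proof.
have f0 := monic_neq0 f_monic.
elim: n p => [|n IH] p le_p_n /=.
  move: le_p_n; rewrite leqn0 size_poly_eq0 => /eqP ->.
  by exists 0; rewrite skew_mul0l subr0 size_poly0 size_poly_gt0.
case: ifP => [lt_p_f|/negbT]; first by exists 0; rewrite skew_mul0l subr0.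
rewrite -leqNgt => le_f_p; set k := (size p - size f)%N.
have p0 : p != 0 by rewrite -size_poly_gt0 (leq_trans _ le_f_p) ?size_poly_gt0.
have lp0 : lead_coef p != 0 by rewrite lead_coef_eq0.
have [size_f lead_f] := size_iter_tmul k f0.
have [size_t lead_t] := size_polyCM (iter k T f) lp0.
have lt_p : (size (p - (lead_coef p)%:P * 'X^k ** f)%R < size p)%N.
  apply: size_sub_lead_lt; rewrite // skew_mulCMl skew_mulXnl ?size_t ?lead_t ?size_f ?lead_f.
    by rewrite /k subnKC.
  have iter_sigma1 : iter k sigma 1 = 1 by elim: (k) => //= i ->; rewrite rmorph1.
  by rewrite (monicP f_monic) iter_sigma1 mulr1.
have [q [-> size_rem]] := IH _ (leq_trans lt_p le_p_n).
by exists ((lead_coef p)%:P * 'X^k + q); rewrite skew_mulDl opprD addrA.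
Qed.

Lemma srem_spec p : exists q, rem p = p - q ** f /\ (size (rem p) < size f)%N.
Proof. exact: srem_rec_spec. Qed.

Lemma size_srem p : (size (rem p) < size f)%N.
Proof. by have [q []] := srem_spec p. Qed.

Lemma srem_decomp p : exists q, p = q ** f + rem p.
Proof. by have [q [-> _]] := srem_spec p; exists q; rewrite addrC subrK. Qed.

Lemma srem_uniq q r : (size r < size f)%N -> rem (q ** f + r) = r.
Proof.
move=> size_r; have [q' [rem_eq size_rem]] := srem_spec (q ** f + r).
set s := rem _ in rem_eq size_rem *.
have diff : (q - q') ** f = s - r by rewrite skew_mulBl rem_eq addrAC addrK.
have [q_eq|q_neq] := eqVneq (q - q') 0.
  by apply/eqP; rewrite -subr_eq0 -diff q_eq skew_mul0l.
have size_diff : (size (s - r)%R < size f)%N.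
  by apply: leq_ltn_trans (size_polyD _ _) _; rewrite size_polyN gtn_max size_rem.
have q_gt0 : (0 < size (q - q')%R)%N by rewrite size_poly_gt0.
by move: size_diff; rewrite -diff (size_skew_mul q_neq (monic_neq0 f_monic)).1; lia.
Qed.

Lemma srem_small r : (size r < size f)%N -> rem r = r.
Proof. by move=> size_r; rewrite -[r in rem r]add0r -(skew_mul0l f) srem_uniq. Qed.

Lemma srem_mulf q : rem (q ** f) = 0.
Proof. by rewrite -[q ** f]addr0 srem_uniq // size_poly0 size_poly_gt0 monic_neq0. Qed.

Lemma srem_zmod_morphism : zmod_morphism rem.
Proof.
move=> x y; have [qx {1}->] := srem_decomp x; have [qy {1}->] := srem_decomp y.
rewrite opprD addrACA -skew_mulBl srem_uniq //.
by apply: leq_ltn_trans (size_polyD _ _) _; rewrite size_polyN gtn_max !size_srem.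
Qed.
HB.instance Definition _ := GRing.isZmodMorphism.Build _ _ rem srem_zmod_morphism.

Lemma sremD : {morph rem : x y / x + y}.
Proof. exact: raddfD. Qed.

Lemma sremB : {morph rem : x y / x - y}.
Proof. exact: raddfB. Qed.

Lemma srem_sum I (s : seq I) (P : pred I) (F : I -> {poly D}) :
  rem (\sum_(i <- s | P i) F i) = \sum_(i <- s | P i) rem (F i).
Proof. exact: raddf_sum. Qed.

Lemma srem_mulfD q x : rem (q ** f + x) = rem x.
Proof. by rewrite sremD srem_mulf add0r. Qed.

Lemma sremCM c x : rem (c%:P * x) = c%:P * rem x.
Proof.
have [q {1}->] := srem_decomp x; rewrite mulrDr -skew_mulCMl srem_uniq //.
by apply: leq_ltn_trans (size_polyCM_le _ _) (size_srem _).
Qed.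

Lemma srem_eq0 x : rem x = 0 -> exists q, x = q ** f.
Proof. by have [q {2}->] := srem_decomp x => ->; exists q; rewrite addr0. Qed.

Lemma srem_mulC x b e : f ** b%:P = e%:P ** f -> rem (x ** b%:P) = rem x ** b%:P.
Proof.
move=> semi_inv; have [q {1}->] := srem_decomp x.
rewrite skew_mulDl skew_mulA semi_inv -skew_mulA srem_uniq //.
exact: leq_ltn_trans (size_skew_mulC_le _ _) (size_srem x).
Qed.

End RightDivision.

(** * Irreducibility and zero divisors of [S_f] *)

Lemma monicCM_lead_inv d : d != 0 ->
  ((lead_coef d)^-1%:P * d) \is monic /\ size ((lead_coef d)^-1%:P * d) = size d.
Proof.
move=> d0; have ld_unit : lead_coef d \is a GRing.unit by rewrite unitDE lead_coef_eq0.
have ldV0 : (lead_coef d)^-1 != 0 by rewrite -unitDE unitrV.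
have [size_eq lead_eq] := size_polyCM d ldV0.
by split=> //; apply/monicP; rewrite lead_eq mulVr.
Qed.

Lemma monic_size1 d : d \is monic -> size d = 1%N -> d = 1.
Proof.
move=> /monicP d_monic d1; rewrite [d]size1_polyC ?d1 //.
have -> : d`_0 = lead_coef d by rewrite lead_coefE d1.
by rewrite d_monic.
Qed.

(* Euclid's algorithm: a greatest common right divisor of [h] and [f] lies in the left
   ideal they span. *)
Lemma right_bezout h f : f != 0 ->
  exists d, [/\ d \is monic, exists u v, d = u ** h + v ** f,
               exists a, h = a ** d & exists b, f = b ** d].
Proof.
move=> f0.
suff gcrd_below n d : (exists u v, d = u ** h + v ** f) -> d != 0 -> (size d <= n)%N ->
    exists d, [/\ d \is monic, exists u v, d = u ** h + v ** f,
                 exists a, h = a ** d & exists b, f = b ** d].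
  by apply: (gcrd_below (size f) f) => //; exists 0, 1; rewrite skew_mul0l add0r skew_mul1l.
elim: n d => [|n IH] d [u [v d_eq]] d0 le_d_n.
  by move: le_d_n; rewrite leqn0 size_poly_eq0 (negPf d0).
have [d'_monic size_d'] := monicCM_lead_inv d0.
set c := (lead_coef d)^-1 in d'_monic size_d'; set d' := c%:P * d in d'_monic size_d'.
have d'_eq : d' = (c%:P * u) ** h + (c%:P * v) ** f by rewrite /d' d_eq mulrDr !skew_mulCMl.
have smaller x : (size (srem sigma delta d' x) <= n)%N.
  by have := size_srem d'_monic x; rewrite size_d'; lia.
have [qh [rem_h _]] := srem_spec d'_monic h; have [qf [rem_f _]] := srem_spec d'_monic f.
have [rh0|rh_neq0] := eqVneq (srem sigma delta d' h) 0; last first.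
  apply: IH rh_neq0 (smaller h); exists (1 - qh ** (c%:P * u)), (- (qh ** (c%:P * v))).
  by rewrite rem_h d'_eq skew_mulDr -!skew_mulA skew_mulBl skew_mul1l skew_mulNl opprD addrA.
have [rf0|rf_neq0] := eqVneq (srem sigma delta d' f) 0; last first.
  apply: IH rf_neq0 (smaller f); exists (- (qf ** (c%:P * u))), (1 - qf ** (c%:P * v)).
  by rewrite rem_f d'_eq skew_mulDr -!skew_mulA skew_mulBl skew_mul1l skew_mulNl opprD addrCA.
exists d'; split=> //; first by exists (c%:P * u), (c%:P * v).
  by exists qh; apply/eqP; rewrite -subr_eq0 -rem_h rh0.
by exists qf; apply/eqP; rewrite -subr_eq0 -rem_f rf0.
Qed.

Lemma irreducible_bezout f h : f \is monic -> skew_irreducible sigma delta f ->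
  h != 0 -> (size h < size f)%N -> exists p q, 1 = p ** h + q ** f.
Proof.
move=> f_monic [_ f_irr] h0 lt_h_f.
have [d [d_monic [u [v d_eq]] [a h_eq] [b f_eq]]] := right_bezout h (monic_neq0 f_monic).
have [d1|d_neq1] := eqVneq (size d) 1%N.
  by exists u, v; rewrite -d_eq (monic_size1 d_monic d1).
have d0 := monic_neq0 d_monic.
have a0 : a != 0 by apply: contraNneq h0 => a0; rewrite h_eq a0 skew_mul0l.
have b0 : b != 0 by apply: contraNneq (monic_neq0 f_monic) => b0; rewrite f_eq b0 skew_mul0l.
have size_h := (size_skew_mul a0 d0).1; have size_f := (size_skew_mul b0 d0).1.
rewrite -h_eq in size_h; rewrite -f_eq in size_f.
have := size_poly_gt0 a; have := size_poly_gt0 b; have := size_poly_gt0 d.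
rewrite a0 b0 d0 => a_gt0 b_gt0 d_gt0.
by exfalso; apply: f_irr; exists b, d; rewrite /sdeg; split=> //; move: d_neq1; lia.
Qed.

(* Left multiplication by constants, as a right action of the opposite ring [D^c]. *)
Definition lscale (x : {poly D}) (b : D^c) : {poly D} := (b : D)%:P * x.

Lemma lscaleDl x y b : lscale (x + y) b = lscale x b + lscale y b.
Proof. exact: mulrDr. Qed.

Lemma lscaleDr x (b b' : D^c) : lscale x (b + b') = lscale x b + lscale x b'.
Proof. by rewrite /lscale polyCD mulrDl. Qed.

Lemma lscaleA x (b b' : D^c) : lscale x (b * b') = lscale (lscale x b) b'.
Proof. by rewrite /lscale [(b * b' : D^c) : D]/= polyCM mulrA. Qed.

Lemma lscale1 x : lscale x 1 = x.
Proof. exact: mul1r. Qed.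

Lemma converse_unit : {in predT, forall a : D^c, a != 0 -> a \is a GRing.unit}.
Proof. by move=> a _; rewrite -[a \is a _]/((a : D) \is a GRing.unit) unitDE. Qed.

Definition rscale x c := x ** c%:P.

Lemma rscaleDl x y c : rscale (x + y) c = rscale x c + rscale y c.
Proof. exact: skew_mulDl. Qed.

Lemma rscaleDr x c c' : rscale x (c + c') = rscale x c + rscale x c'.
Proof. by rewrite /rscale polyCD skew_mulDr. Qed.

Lemma rscaleA x c c' : rscale x (c * c') = rscale (rscale x c) c'.
Proof. by rewrite /rscale polyCM -skew_mulCl skew_mulA. Qed.

Lemma rscale1 x : rscale x 1 = x.
Proof. by rewrite /rscale polyC1 skew_mul1r. Qed.

Lemma polyCX_sum_wide n p : (size p <= n)%N -> p = \sum_(i < n) (p`_i)%:P * 'X^i.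
Proof.
move=> le_p_n; under eq_bigr do rewrite mul_polyC.
by rewrite -poly_def -/(take_poly n p) take_poly_id.
Qed.

(* The left [D]-span of [N] elements cannot contain [1, t, ..., t^N]. *)
Lemma srem_mul_not_onto f h N : f \is monic -> (N.+1 < size f)%N ->
  ~ (forall r, (size r < size f)%N ->
       exists2 s : {poly D}, (size s <= N)%N & srem sigma delta f (s ** h) = r).
Proof.
move=> f_monic lt_N_f onto.
pose u (i : 'I_N) := srem sigma delta f ('X^i ** h).
have span r : (size r < size f)%N ->
    exists2 b, Kcoords predT b & r = \sum_i lscale (u i) (b i).
  move=> /onto[s le_s <-]; exists (fun i : 'I_N => s`_i : D^c) => //.
  rewrite {1}(polyCX_sum_wide le_s) skew_mul_suml (srem_sum f_monic).
  by apply: eq_bigr => i _; rewrite skew_mulCMl (sremCM f_monic).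
have size_Xn (j : 'I_N.+1) : (size ('X^j : {poly D}) < size f)%N.
  by rewrite size_polyXn; apply: leq_ltn_trans lt_N_f; rewrite ltnS -ltnS.
have [c [_ [j0 cj0] c_rel]] :=
  span_dependent (predT_divring_closed _) converse_unit lscaleDl lscaleDr lscaleA span size_Xn.
move: (congr1 (fun p => p`_j0) c_rel); rewrite /lscale /= coef_sum_polyCXn coef0.
by move/eqP; rewrite (negPf cj0).
Qed.

(* If [k h] is in [D[t] f] with [k] monic, the Bezout identity [1 = p h + q f] writes every
   [r] as [s h] modulo [f] with [deg s < deg k]: too few coordinates by [srem_mul_not_onto]. *)
Lemma irreducible_srem_mul_neq0 f g h : f \is monic -> skew_irreducible sigma delta f ->
  g != 0 -> h != 0 -> (size g < size f)%N -> (size h < size f)%N ->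
  srem sigma delta f (g ** h) != 0.
Proof.
move=> f_monic f_irr g0 h0 lt_g lt_h; apply/eqP => /(srem_eq0 f_monic)[q gh_eq].
have [p [b bez]] := irreducible_bezout f_monic f_irr h0 lt_h.
have [k_monic size_k] := monicCM_lead_inv g0.
set k := _ * g in k_monic size_k.
have kh_eq : k ** h = ((lead_coef g)^-1%:P * q) ** f by rewrite !skew_mulCMl gh_eq.
have g_gt0 : (0 < size g)%N by rewrite size_poly_gt0.
apply: (@srem_mul_not_onto f h (size f).-2 f_monic); first by lia.
move=> r lt_r; have [t rp_eq] := srem_decomp k_monic (r ** p).
set s := srem _ _ k _ in rp_eq; exists s.
  by have := size_srem k_monic (r ** p); rewrite -/s size_k; lia.
have r_eq : r = (t ** ((lead_coef g)^-1%:P * q) + r ** b) ** f + s ** h.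
  rewrite -{1}(skew_mul1r r) bez skew_mulDr -!skew_mulA rp_eq skew_mulDl skew_mulA kh_eq.
  by rewrite -skew_mulA skew_mulDl addrAC.
by rewrite -[RHS](srem_small f_monic lt_r) [in RHS]r_eq srem_mulfD.
Qed.

(** * [S_f] as a left [D]-space and a right [B]-module *)

Lemma in_Sf_sub f x y : in_Sf f x -> in_Sf f y -> in_Sf f (x - y).
Proof.
rewrite /in_Sf => lt_x lt_y.
by apply: leq_ltn_trans (size_polyD _ _) _; rewrite size_polyN gtn_max lt_x.
Qed.

Lemma Sf_unique_of_onto f (phi : {poly D} -> {poly D}) :
  {morph phi : x y / x - y} -> (forall x, in_Sf f x -> x != 0 -> phi x != 0) ->
  (forall r, in_Sf f r -> exists2 x, in_Sf f x & phi x = r) ->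
  forall r, in_Sf f r -> exists! x, in_Sf f x /\ phi x = r.
Proof.
move=> phiB phi_inj onto r /onto[x lt_x phi_x]; exists x; split=> // y [lt_y phi_y].
apply/eqP; rewrite -subr_eq0; apply/negPn/negP => /(phi_inj _ (in_Sf_sub lt_x lt_y)).
by rewrite phiB phi_x phi_y subrr eqxx.
Qed.

Lemma Sf_division_irreducible f : f \is monic -> (1 < size f)%N ->
  Sf_division sigma delta f -> skew_irreducible sigma delta f.
Proof.
move=> f_monic lt_1f Sf_div; have f0 := monic_neq0 f_monic; split.
  move=> [u [fu1 _]].
  have u0 : u != 0 by apply: contra_eq_neq fu1 => ->; rewrite skew_mul0r eq_sym oner_eq0.
  have := (size_skew_mul f0 u0).1; rewrite fu1 size_poly1.
  by have := size_poly_gt0 u; rewrite u0; lia.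
move=> [g [h [f_eq [lt_g lt_h]]]].
have g0 : g != 0 by apply: contraNneq f0 => g0; rewrite f_eq g0 skew_mul0l.
have h0 : h != 0 by apply: contraNneq f0 => h0; rewrite f_eq h0 skew_mul0r.
have in_Sf_lt p : (sdeg p < sdeg f)%N -> in_Sf f p by rewrite /sdeg /in_Sf; lia.
have in_Sf0 : in_Sf f 0 by rewrite /in_Sf size_poly0 size_poly_gt0.
have [x [_ x_uniq]] := (Sf_div g (in_Sf_lt g lt_g) g0).1 0 in_Sf0.
have gh0 : sf_mul sigma delta f g h = 0.
  by rewrite /sf_mul -f_eq; have := srem_mulf f_monic 1; rewrite skew_mul1l.
have x0 : x = 0 by apply: x_uniq; rewrite /sf_mul skew_mul0r srem_small.
by move: h0; rewrite -(x_uniq h) ?x0 ?eqxx //; split=> //; apply: in_Sf_lt.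
Qed.

Lemma Sf_left_basis f : f \is monic ->
  free_basis predT lscale (in_Sf f) (fun i : 'I_(size f).-1 => 'X^i).
Proof.
move=> f_monic; have f_gt0 : (0 < size f)%N by rewrite size_poly_gt0 monic_neq0.
split=> [x lt_x|b _ /(congr1 (fun p => p`_ _)) b0 i|b _].
- exists (fun i : 'I__ => x`_i : D^c) => //; apply: polyCX_sum_wide; rewrite /in_Sf in lt_x; lia.
- by have := b0 i; rewrite /lscale /= coef_sum_polyCXn coef0.
rewrite /in_Sf; apply: (@leq_ltn_trans (size f).-1); last by lia.
apply: size_sum_le => i _.
by apply: leq_trans (size_polyCM_le _ _) _; rewrite size_polyXn.
Qed.

Lemma right_mul_onto f g : f \is monic -> skew_irreducible sigma delta f ->
  in_Sf f g -> g != 0 ->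
  forall r, in_Sf f r -> exists2 x, in_Sf f x & srem sigma delta f (x ** g) = r.
Proof.
move=> f_monic f_irr lt_g g0.
apply: (injective_endo_surjective (predT_divring_closed _) converse_unit lscaleDl lscaleDr
  lscaleA lscale1 (Sf_left_basis f_monic)).
- by move=> x y; rewrite skew_mulDl (sremD f_monic).
- by move=> x b _; rewrite /lscale skew_mulCMl (sremCM f_monic).
- by move=> x _; apply: size_srem.
move=> x lt_x; apply: contra_eq => x0.
exact: irreducible_srem_mul_neq0.
Qed.

Section Automorphism.

Hypothesis sigma_bij : bijective sigma.

(* Peel off the leading term with the coefficient [sigma^-m (lead_coef x)]. *)
Lemma right_coords m x : (size x <= m)%N ->
  exists d : 'I_m -> D, x = \sum_(i < m) 'X^i ** (d i)%:P.
Proof.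
have [sigma_inv sigmaK sigma_invK] := sigma_bij.
elim: m x => [|m IH] x le_x_m.
  by exists (fun _ => 0); move: le_x_m; rewrite leqn0 size_poly_eq0 big_ord0 => /eqP.
suff [w /IH[d d_eq]] : exists w, (size (x - 'X^m ** w%:P)%R <= m)%N.
  exists (fun i => if unlift ord_max i is Some i' then d i' else w).
  rewrite (bigD1_ord ord_max) // unlift_none; under eq_bigr do rewrite liftK lift_max.
  by rewrite -d_eq /= addrC subrK.
have [le_x|lt_m_x] := leqP (size x) m; first by exists 0; rewrite polyC0 skew_mul0r subr0.
have size_x : size x = m.+1 by apply/eqP; rewrite eqn_leq le_x_m.
have x0 : x != 0 by rewrite -size_poly_gt0 size_x.
set w := iter m sigma_inv (lead_coef x).
have iter_sigmaK : iter m sigma w = lead_coef x.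
  rewrite /w; elim: (m) (lead_coef x) => // k IHk a.
  by rewrite [iter k.+1 sigma _]iterSr /= sigma_invK IHk.
have w0 : w != 0.
  apply: contraNneq x0 => w0; rewrite -lead_coef_eq0 -iter_sigmaK w0.
  by apply/eqP; elim: (m) => //= k ->; rewrite rmorph0.
have w0P : w%:P != 0 by rewrite polyC_eq0.
exists w; rewrite -ltnS -size_x; apply: size_sub_lead_lt; rewrite ?size_XnC ?size_x //.
by rewrite skew_mulXnl (size_iter_tmul _ w0P).2 lead_coefC iter_sigmaK.
Qed.

Lemma right_coords_free m (d : 'I_m -> D) :
  \sum_(i < m) 'X^i ** (d i)%:P = 0 -> forall i, d i = 0.
Proof.
elim: m d => [|m IH] d; first by move=> _ [].
rewrite (bigD1_ord ord_max) //; under eq_bigr do rewrite lift_max.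
set low := \sum_(i < m) _ => /= sum0.
have size_low : (size low <= m)%N.
  by apply: size_sum_le => i _; apply: leq_trans (size_XnC_le _ _) _.
have dm0 : d ord_max = 0.
  apply/eqP/negP => /negP dm_neq0; have := congr1 (fun p : {poly D} => size p) sum0.
  by rewrite size_poly0 size_polyDl size_XnC.
move: sum0; rewrite dm0 polyC0 skew_mul0r add0r => /IH low0 i.
by case: (unliftP ord_max i) => [i' ->|->].
Qed.

Lemma Sf_right_basis f (B : {pred D}) n (e : 'I_n -> D) :
  f \is monic ->
  (forall c, exists b : 'I_n -> D, (forall j, b j \in B) /\ c = \sum_j e j * b j) ->
  (forall b : 'I_n -> D, (forall j, b j \in B) -> \sum_j e j * b j = 0 -> forall j, b j = 0) ->
  free_basis B rscale (in_Sf f)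
    (fun ij : 'I_(size f).-1 * 'I_n => 'X^(ij.1) ** (e ij.2)%:P).
Proof.
move=> f_monic span free; have f_gt0 : (0 < size f)%N by rewrite size_poly_gt0 monic_neq0.
have regroup (b : 'I_(size f).-1 * 'I_n -> D) :
    \sum_(ij : 'I_(size f).-1 * 'I_n) rscale ('X^(ij.1) ** (e ij.2)%:P) (b ij) =
    \sum_(i < (size f).-1) 'X^i ** (\sum_j e j * b (i, j))%:P.
  transitivity (\sum_(i < (size f).-1) \sum_j rscale ('X^i ** (e j)%:P) (b (i, j))).
    by rewrite pair_bigA; apply: eq_bigr => -[i j].
  apply: eq_bigr => i _; rewrite raddf_sum skew_mul_sumr; apply: eq_bigr => j _.
  by rewrite /rscale skew_mulA skew_mulCl -polyCM.
split=> [x lt_x|b Bb|b Bb].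
- have [|d ->] := right_coords (m := (size f).-1) (x := x); first by rewrite /in_Sf in lt_x; lia.
  have [c Hc] := fin_all_exists (fun i => span (d i)).
  exists (fun ij => c ij.1 ij.2) => [ij|]; first exact: (Hc ij.1).1.
  by rewrite regroup; apply: eq_bigr => i _; rewrite -(Hc i).2.
- rewrite regroup => /right_coords_free coords0 [i j].
  exact: free (fun j => b (i, j)) (fun j => Bb (i, j)) (coords0 i) j.
rewrite /in_Sf; apply: (@leq_ltn_trans (size f).-1); last by lia.
apply: size_sum_le => -[i j] _; apply: leq_trans (size_skew_mulC_le _ _) _.
exact: leq_trans (size_XnC_le _ _) (ltn_ord i).
Qed.

Lemma left_mul_onto f g (B : {pred D}) :
  subring_closed B -> free_right_module_finite_rank B -> f \is monic ->
  weak_semi_invariant sigma delta B f -> skew_irreducible sigma delta f ->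
  in_Sf f g -> g != 0 ->
  forall r, in_Sf f r -> exists2 x, in_Sf f x & srem sigma delta f (g ** x) = r.
Proof.
move=> B_ring B_free f_monic f_semi f_irr lt_g g0.
have B_divring := free_rank_divring_closed D_division B_ring B_free.
have B_unit : {in B, forall b, b != 0 -> b \is a GRing.unit} by move=> b _; rewrite unitDE.
have [n [e [span free]]] := B_free.
apply: (injective_endo_surjective B_divring B_unit rscaleDl rscaleDr rscaleA rscale1
  (Sf_right_basis f_monic span free)).
- by move=> x y; rewrite skew_mulDr (sremD f_monic).
- move=> x b Bb; have [d f_b] := f_semi b Bb.
  by rewrite /rscale -skew_mulA (srem_mulC f_monic _ f_b).
- by move=> x _; apply: size_srem.
by move=> x lt_x; apply: contra_eq => x0; apply: irreducible_srem_mul_neq0.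
Qed.

Lemma irreducible_Sf_division f (B : {pred D}) :
  subring_closed B -> free_right_module_finite_rank B -> f \is monic ->
  weak_semi_invariant sigma delta B f -> skew_irreducible sigma delta f ->
  Sf_division sigma delta f.
Proof.
move=> B_ring B_free f_monic f_semi f_irr g lt_g g0; split=> r lt_r.
- apply: Sf_unique_of_onto lt_r; first by move=> x y; rewrite /sf_mul skew_mulBr (sremB f_monic).
    by move=> x lt_x x0; apply: irreducible_srem_mul_neq0.
  exact: left_mul_onto B_ring B_free f_monic f_semi f_irr lt_g g0.
apply: Sf_unique_of_onto lt_r; first by move=> x y; rewrite /sf_mul skew_mulBl (sremB f_monic).
  by move=> x lt_x x0; apply: irreducible_srem_mul_neq0.
exact: right_mul_onto f_monic f_irr lt_g g0.
Qed.

Lemma Sf_division_iff_irreducible f (B : {pred D}) :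
  subring_closed B -> free_right_module_finite_rank B -> f \is monic -> (1 < size f)%N ->
  weak_semi_invariant sigma delta B f ->
  Sf_division sigma delta f <-> skew_irreducible sigma delta f.
Proof.
move=> B_ring B_free f_monic f_size f_semi.
split; first exact: Sf_division_irreducible.
by move=> f_irr; apply: (irreducible_Sf_division B_ring B_free f_monic f_semi f_irr).
Qed.

End Automorphism.

End SkewPolynomials.

Lemma free_right_module_predT (D : unitRingType) :
  free_right_module_finite_rank (predT : {pred D}).
Proof.
exists 1%N, (fun _ => 1); split=> [x|b _]; first by exists (fun _ => x); rewrite big_ord1 mul1r.
by rewrite big_ord1 mul1r => b0 i; rewrite (ord1 i).
Qed.

Theorem mainTheorem9 (D : unitRingType) (sigma : {rmorphism D -> D}) (delta : D -> D) :
  division_ring D ->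
  bijective sigma ->
  left_sigma_derivation sigma delta ->
  (forall (B : {pred D}) (f : {poly D}),
     subring_closed B ->
     free_right_module_finite_rank B ->
     f \is monic -> (2 <= sdeg f)%N ->
     weak_semi_invariant sigma delta B f ->
     (Sf_division sigma delta f <-> skew_irreducible sigma delta f)) /\
  (forall f : {poly D},
     f \is monic -> (2 <= sdeg f)%N ->
     right_semi_invariant sigma delta f ->
     (Sf_division sigma delta f <-> skew_irreducible sigma delta f)).
Proof.
move=> D_division sigma_bij delta_der.
have size_gt1 f : (2 <= sdeg f)%N -> (1 < size f)%N by rewrite /sdeg; lia.
split=> [B f B_ring B_free f_monic /size_gt1 f_size f_semi|f f_monic /size_gt1 f_size f_semi].
  exact: (Sf_division_iff_irreducible delta_der D_division sigma_bij B_ring B_free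
    f_monic f_size f_semi).
have f_weak : weak_semi_invariant sigma delta predT f by move=> b _; apply: f_semi.
have predT_ring : subring_closed (predT : {pred D}) by [].
exact: (Sf_division_iff_irreducible delta_der D_division sigma_bij predT_ring
  (free_right_module_predT D) f_monic f_size f_weak).
Qed.
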